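(* Let $N\ge 4$. Let $q_1,\dots,q_N\in(0,1)$ and $p_{i,k}\in(0,1)$ ($1\le i\le N$, $1\le k\le N-1$) satisfy $p_{i,k}>p_{j,k}$ whenever $i<j$ (for each $k$) and $p_{i,k}<p_{i,l}$ whenever $k<l$ (for each $i$). Let $\mathcal F_N$ be the set of $(N-1)\times N$ matrices over $\mathrm{GF}(2)$ of the form $$\mathbf F=\begin{pmatrix}1&1&0&\cdots&0&0\\ 1&0&1&\cdots&0&0\\ \vdots&\vdots&\vdots&\ddots&\vdots&\vdots\\ 1&0&0&\cdots&1&0\\ u_1&u_2&u_3&\cdots&u_{N-1}&1\end{pmatrix},$$ i.e. for $1\le j\le N-2$ row $j$ has ones exactly in columns $1$ and $j+1$, and the last row is $(u_1,\dots,u_{N-1},1)$ with $u_k\in\mathrm{GF}(2)$ and $u_1\oplus u_2\oplus\cdots\oplus u_{N-1}=1$. Then every element of $\mathcal F_N$ is admissible, and the matrix $$\hat{\mathbf F}_N=\begin{pmatrix}1&1&0&\cdots&0\\ 1&0&1&\cdots&0\\ \vdots&\vdots&\vdots&\ddots&\vdots\\ 1&0&0&\cdots&1\end{pmatrix}_{(N-1)\times N}$$ (row $j$ has ones exactly in columns $1$ and $j+1$, $j=1,\dots,N-1$; this is the element of $\mathcal F_N$ with $u_1=1$, $u_2=\cdots=u_{N-1}=0$) is the unique minimizer of $P_e^U$ over $\mathcal F_N$: $P_e^U(\mathbf F)\ge P_e^U(\hat{\mathbf F}_N)$ for all $\mathbf F\in\mathcal F_N$, with equality only if $\mathbf F=\hat{\mathbf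 F}_N$.
   Context: An $(N-1)\times N$ matrix $\mathbf F$ over $\mathrm{GF}(2)$ is admissible if, for every $j\in\{1,\dots,N\}$, the $(N-1)\times(N-1)$ matrix $\mathbf F_j$ obtained by deleting the $j$-th column of $\mathbf F$ is invertible over $\mathrm{GF}(2)$. For admissible $\mathbf F$, let $\mathbf G_{i,k}$ be the $k$-th column of $\mathbf F_i^{-1}$ (over $\mathrm{GF}(2)$) and $|\mathbf G_{i,k}|$ its Hamming weight. Given numbers $q_k\in(0,1)$ and $p_{i,k}\in(0,1)$, define $$P_e^U(\mathbf F)=\frac1N\sum_{i=1}^N\Big[\sum_{k=1,k\neq i}^N q_k+(N-1)q_i+\sum_{k=1}^{N-1}p_{i,k}\,|\mathbf G_{i,k}|\Big].$$ The class $\mathcal F_N$ consists of the matrices obtained by appending a row and a column to the $(N-1)$-user design $\hat{\mathbf F}_{N-1}$ (placed in the upper-left corner) while keeping all $\mathbf F_j$ invertible. *)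

(* Conventions: N = n.+1, so matrices are 'M['F_2]_(n, n.+1);
   indices are 0-based: user i in 1..N is i : 'I_n.+1, k in 1..N-1 is k : 'I_n. *)
From HB Require Import structures.
From mathcomp Require Import all_boot all_order all_algebra.
Set Implicit Arguments. Unset Strict Implicit. Unset Printing Implicit Defensive.
Import Order.TTheory GRing.Theory Num.Theory.
Local Open Scope ring_scope.

Definition Fdel n (F : 'M['F_2]_(n, n.+1)) (j : 'I_n.+1) : 'M['F_2]_n := col' j F.

Definition admissible n (F : 'M['F_2]_(n, n.+1)) : Prop :=
  forall j : 'I_n.+1, Fdel F j \in unitmx.

Definition Gweight n (F : 'M['F_2]_(n, n.+1)) (i : 'I_n.+1) (k : 'I_n) : nat :=
  #|[set r : 'I_n | invmx (Fdel F i) r k != 0]|.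

Definition PeU (R : realFieldType) n (q : 'I_n.+1 -> R) (p : 'I_n.+1 -> 'I_n -> R)
    (F : 'M['F_2]_(n, n.+1)) : R :=
  (n.+1)%:R^-1 * \sum_(i < n.+1)
     ((\sum_(k < n.+1 | k != i) q k) + n%:R * q i
      + \sum_(k < n) p i k * (Gweight F i k)%:R).

Definition FN_mat n (u : 'I_n -> 'F_2) : 'M['F_2]_(n, n.+1) :=
  \matrix_(i < n, j < n.+1)
    if (i.+1 < n)%N then ((j == 0 :> nat) || (j == i.+1 :> nat))%:R
    else match unlift ord_max j with Some k => u k | None => 1 end.

Definition inFN n (F : 'M['F_2]_(n, n.+1)) : Prop :=
  exists u : 'I_n -> 'F_2, \sum_(k < n) u k = 1 /\ F = FN_mat u.

Definition Fhat n : 'M['F_2]_(n, n.+1) :=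
  \matrix_(i < n, j < n.+1) ((j == 0 :> nat) || (j == i.+1 :> nat))%:R.

From HB Require Import structures.
From mathcomp Require Import all_boot all_order all_algebra.
From mathcomp Require Import zify lra.
Set Implicit Arguments. Unset Strict Implicit. Unset Printing Implicit Defensive.
Import Order.TTheory GRing.Theory Num.Theory.
Local Open Scope ring_scope.

(* Every F in F_N has zero row sums over GF(2), i.e. the all-ones
   vector lies in its kernel.  If moreover F V = 1 for some N x (N-1) matrix
   V, then for every j the matrix V - 1 (row j of V) is still a right inverse
   of F and vanishes on row j, so deleting that row inverts F_j = col' j F.
   Hence every F_j is invertible, and when the columns of V are indicators of
   sets S_k, the Hamming weight of column k of F_j^{-1} only depends on
   whether j lies in S_k.  For F in F_N such a V exists with S_k = {k+1} when
   the last-row entry of column k+1 is u_{k+1} = 0 (or k+1 = n), and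
   S_k = {k+1, n} otherwise.  The weight term of P_e^U thus splits into
   per-column costs, and a one-point support costs strictly less than a
   two-point one because p_{0,k} > p_{k+1,k}.  Since \hat F_N is the only
   member of F_N all of whose supports are single points, it is the unique
   minimizer. *)

Lemma F2_cases (x : 'F_2) : x = 0 \/ x = 1.
Proof. by case: x => [[|[|m]] Hm]; [left; exact: val_inj | right; exact: val_inj |]. Qed.

Lemma F2_addxx (x : 'F_2) : x + x = 0.
Proof. by apply: addrr_pchar2; exact: pchar_Fp. Qed.

Lemma F2_natb_eq (a b : bool) : (a%:R == b%:R :> 'F_2) = (a == b).
Proof. by case: a; case: b; rewrite ?eqxx // ?oner_eq0 // eq_sym oner_eq0. Qed.

Lemma sum_mul_delta (R : pzSemiRingType) m (f : 'I_m -> R) (a : 'I_m) :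
  \sum_c f c * (c == a)%:R = f a.
Proof.
by under eq_bigr => c _ do rewrite mulr_natr mulrb; rewrite -big_mkcond big_pred1_eq.
Qed.

Lemma mulmx_col'_row' (R : pzSemiRingType) m n p (A : 'M[R]_(m, n.+1))
    (B : 'M[R]_(n.+1, p)) (j : 'I_n.+1) :
  row j B = 0 -> col' j A *m row' j B = A *m B.
Proof.
move=> Bj0; apply/matrixP => a k; rewrite !mxE (bigD1_ord j) //=.
have /matrixP/(_ 0 k) := Bj0; rewrite !mxE => ->; rewrite mulr0 add0r.
by apply: eq_bigr => r _; rewrite !mxE.
Qed.

Section ColumnDeletion.
Variables (R : comUnitRingType) (n : nat) (F : 'M[R]_(n, n.+1)) (V : 'M[R]_(n.+1, n)).
Hypotheses (F_ones : F *m (const_mx 1 : 'cV_n.+1) = 0) (FV : F *m V = 1%:M).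

(* V shifted by a kernel vector so as to vanish on row j, then row j deleted. *)
Definition del_inverse (j : 'I_n.+1) : 'M[R]_n := row' j (V - const_mx 1 *m row j V).

Lemma del_inverseE j r k : del_inverse j r k = V (lift j r) k - V j k.
Proof. by rewrite !mxE big_ord1 !mxE mul1r. Qed.

Lemma col'_mul_del_inverse j : col' j F *m del_inverse j = 1%:M.
Proof.
rewrite mulmx_col'_row'; first by rewrite mulmxBr mulmxA F_ones mul0mx subr0.
by apply/matrixP => a k; rewrite !mxE big_ord1 !mxE mul1r subrr.
Qed.

Lemma col'_unit j : col' j F \in unitmx.
Proof. exact: (mulmx1_unit (col'_mul_del_inverse j)).1. Qed.

Lemma invmx_col' j : invmx (col' j F) = del_inverse j.
Proof. by rewrite -[RHS](mulKmx (col'_unit j)) col'_mul_del_inverse mulmx1. Qed.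

End ColumnDeletion.

Lemma card_lift_set n (P : pred 'I_n.+1) (j : 'I_n.+1) :
  ~~ P j -> #|[set r : 'I_n | P (lift j r)]| = #|[set c | P c]|.
Proof.
move=> Pj; rewrite -(card_imset _ (@lift_inj _ j)).
suff -> : [set c | P c] = lift j @: [set r | P (lift j r)] by [].
apply/setP => c; rewrite inE; case: (unliftP j c) => [r ->|->].
  by rewrite (mem_imset _ _ (@lift_inj _ j)) inE.
rewrite (negbTE Pj); apply/esym/negbTE/imsetP => [[r _ /eqP]].
by rewrite (negbTE (neq_lift _ _)).
Qed.

(* Weight of column k of F_j^{-1} when column k of the right inverse is the
   indicator of S: the points of 'I_n.+1 \ {j} on the other side of S than j. *)
Definition supp_weight n (S : {set 'I_n.+1}) (j : 'I_n.+1) : nat :=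
  if j \in S then (n.+1 - #|S|)%N else #|S|.

Lemma Gweight_supp n (F : 'M['F_2]_(n, n.+1)) (S : 'I_n -> {set 'I_n.+1}) :
  F *m (const_mx 1 : 'cV_n.+1) = 0 -> F *m (\matrix_(c, k) (c \in S k)%:R) = 1%:M ->
  forall j k, Gweight F j k = supp_weight (S k) j.
Proof.
move=> F1 FV j k; rewrite /Gweight /Fdel (invmx_col' F1 FV).
under eq_finset => r do rewrite del_inverseE !mxE subr_eq0 F2_natb_eq.
rewrite (card_lift_set (P := fun c => (c \in S k) != (j \in S k))) ?eqxx //.
rewrite /supp_weight; case: (j \in S k).
  suff -> : [set c | (c \in S k) != true] = ~: S k by rewrite cardsCs setCK card_ord.
  by apply/setP => c; rewrite !inE; case: (c \in S k).
suff -> : [set c | (c \in S k) != false] = S k by [].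
by apply/setP => c; rewrite !inE; case: (c \in S k).
Qed.

Section ClassFN.
Variables (n : nat) (u : 'I_n -> 'F_2).

Definition ucoef (c : 'I_n.+1) : 'F_2 :=
  if unlift ord_max c is Some m then u m else 0.

Lemma ucoef_max : ucoef ord_max = 0.
Proof. by rewrite /ucoef unlift_none. Qed.

Lemma FN_chain_row (a : 'I_n) c : (a.+1 < n)%N ->
  FN_mat u a c = ((c == 0 :> nat) || (c == a.+1 :> nat))%:R.
Proof. by move=> ha; rewrite mxE ha. Qed.

Lemma FN_last_row (a : 'I_n) c : ~~ (a.+1 < n)%N ->
  FN_mat u a c = ucoef c + (c == ord_max)%:R.
Proof.
move=> /negbTE ha; rewrite mxE ha /ucoef.
case: unliftP => [m ->|->]; last by rewrite eqxx add0r.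
by rewrite eq_sym (negbTE (neq_lift _ _)) addr0.
Qed.

(* The all-ones vector is in the kernel: chain rows have two ones, and the
   last row sums to (u_1 + ... + u_{N-1}) + 1 = 0. *)
Lemma FN_row_sums : \sum_k u k = 1 -> FN_mat u *m (const_mx 1 : 'cV_n.+1) = 0.
Proof.
move=> hu; apply/matrixP => a z; rewrite !mxE.
under eq_bigr => c _ do rewrite [const_mx _ _ _]mxE mulr1.
case: (boolP (a.+1 < n)%N) => ha.
  under eq_bigr => c _ do rewrite FN_chain_row //.
  rewrite (bigD1 ord0) //= (bigD1 (lift ord0 a)) //= big1.
    by rewrite /bump add1n eqxx addr0 F2_addxx.
  move=> c /andP [c0 ca]; move: c0 ca; rewrite -!val_eqE /= /bump add1n.
  by move=> /negbTE -> /negbTE ->.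
under eq_bigr => c _ do rewrite FN_last_row //.
rewrite big_split /= (bigD1_ord ord_max) //= ucoef_max add0r.
under eq_bigr => m _ do rewrite /ucoef liftK.
rewrite hu (bigD1 ord_max) //= eqxx big1 ?addr0 ?F2_addxx // => c.
by move=> /negbTE ->.
Qed.

(* Support of column k of the right inverse: column k+1, together with the
   final column when u_{k+1} = 1. *)
Definition col_supp (k : 'I_n) : {set 'I_n.+1} :=
  if ucoef (lift ord0 k) == 1 then [set lift ord0 k; ord_max] else [set lift ord0 k].

Lemma FN_col_supp : FN_mat u *m \matrix_(c, k) (c \in col_supp k)%:R = 1%:M.
Proof.
apply/matrixP => a k; rewrite !mxE.
under eq_bigr => c _ do rewrite [X in _ * X]mxE mulr_natr mulrb.
rewrite -big_mkcond /col_supp; set t := lift ord0 k.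
have sum_pair : ucoef t == 1 ->
    \sum_(c in [set t; ord_max]) FN_mat u a c = FN_mat u a t + FN_mat u a ord_max.
  move=> h1; rewrite big_setU1 ?big_set1 // inE.
  by apply: contraTneq h1 => ->; rewrite ucoef_max eq_sym oner_eq0.
case: (boolP (a.+1 < n)%N) => ha.
  have -> : (a == k) = (t == a.+1 :> nat).
    by rewrite -val_eqE /= /bump add1n; apply/eqP/eqP; lia.
  case: ifP => [h1|_]; rewrite ?sum_pair ?big_set1 // !FN_chain_row //=.
  have -> : (n == 0)%N || (n == a.+1)%N = false by apply/negbTE; lia.
  by rewrite addr0.
have an : a.+1 = n by move: (ltn_ord a) ha; lia.
have t_max : (t == ord_max) = (a == k).
  by rewrite -!val_eqE /= /bump add1n; apply/eqP/eqP; lia.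
case: ifP => h1; rewrite ?sum_pair ?big_set1 // !FN_last_row //.
  have tm : (t == ord_max) = false.
    by apply: contraTF h1 => /eqP ->; rewrite ucoef_max eq_sym oner_eq0.
  by rewrite -t_max tm ucoef_max eqxx (eqP h1) addr0 add0r F2_addxx.
have -> : ucoef t = 0 by case: (F2_cases (ucoef t)) => // e; rewrite e eqxx in h1.
by rewrite add0r t_max.
Qed.

Lemma FN_admissible : \sum_k u k = 1 -> admissible (FN_mat u).
Proof. by move=> hu j; apply: col'_unit (FN_row_sums hu) FN_col_supp j. Qed.

Lemma Gweight_FN : \sum_k u k = 1 ->
  forall j k, Gweight (FN_mat u) j k = supp_weight (col_supp k) j.
Proof. by move=> hu; apply: Gweight_supp (FN_row_sums hu) FN_col_supp. Qed.

End ClassFN.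

Definition u_hat (n : nat) (k : 'I_n) : 'F_2 := (k == 0 :> nat)%:R.
Arguments u_hat : clear implicits.

Lemma sum_u_hat n : (0 < n)%N -> \sum_k u_hat n k = 1.
Proof.
move=> hn; rewrite (bigD1 (Ordinal hn)) //= big1 ?addr0 // => k.
by rewrite -val_eqE /= /u_hat => /negbTE ->.
Qed.

Lemma Fhat_FN n : Fhat n = FN_mat (u_hat n).
Proof.
apply/matrixP => a c; rewrite !mxE; case: ifP => // ha.
case: unliftP => [m ->|->] /=.
  rewrite /u_hat /= /bump leqNgt ltn_ord add0n.
  have -> : (m == a.+1 :> nat) = false by apply/negbTE; move: (ltn_ord m); lia.
  by rewrite orbF.
have -> : (n == a.+1)%N by apply/eqP; move: (ltn_ord a) ha; lia.
by rewrite orbT.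
Qed.

Lemma ucoef_u_hat n k : ucoef (u_hat n) (lift ord0 k) = 0.
Proof.
rewrite /ucoef; case: unliftP => [m hm|//].
have : (lift ord0 k : nat) = lift ord_max m by rewrite hm.
by rewrite /u_hat lift_max /= /bump add1n => <-.
Qed.

Lemma col_supp_u_hat n k : col_supp (u_hat n) k = [set lift ord0 k].
Proof. by rewrite /col_supp ucoef_u_hat eq_sym oner_eq0. Qed.

(* Conversely, a member of F_N whose supports are all single points is
   \hat F_N: u vanishes off the first coordinate and sums to 1. *)
Lemma FN_eq_u_hat n u : \sum_k u k = 1 ->
  (forall k, ucoef u (lift ord0 k) = 0) -> FN_mat u = FN_mat (u_hat n).
Proof.
move=> hu hu0.
have u_off (m : 'I_n) : (m : nat) != 0%N -> u m = 0.
  move=> m0; case: (unliftP ord0 (lift ord_max m)) => [k hk|hk].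
    by rewrite -(hu0 k) -hk /ucoef liftK.
  by move: m0; rewrite -lift_max hk.
have u_eq (m : 'I_n) : u m = u_hat n m.
  rewrite /u_hat; case: eqP => [m0|/eqP m0]; last exact: u_off.
  move: hu; rewrite (bigD1 m) //= big1 ?addr0 => [-> //|k km].
  apply: u_off; apply: contra km => /eqP k0.
  by apply/eqP/val_inj; rewrite /= k0 m0.
apply/matrixP => a c; rewrite !mxE.
by case: ifP => // _; case: unlift => // m; rewrite u_eq.
Qed.

(* The contribution of column k of the inverses to the weight term of P_e^U,
   as a function of the support S of that column, with weights w j = p_{j,k}. *)
Section ColumnCost.
Variables (R : realFieldType) (n : nat) (w : 'I_n.+1 -> R).

Definition col_cost (S : {set 'I_n.+1}) : R := \sum_j w j * (supp_weight S j)%:R.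

Lemma supp_weight_pair (t j : 'I_n.+1) : (2 <= n)%N -> t != ord0 -> t != ord_max ->
  (supp_weight [set t] j + (j == ord0) <= supp_weight [set t; ord_max] j + (j == t))%N.
Proof.
move=> hn t0 tm; rewrite /supp_weight cards1 cards2 tm !inE.
have [->|jt] := eqVneq j t; first by rewrite (negbTE t0) /=; lia.
have [->|jm] := eqVneq j ord_max.
  have -> : (ord_max == ord0 :> 'I_n.+1) = false by rewrite -val_eqE /=; lia.
  by rewrite /=; lia.
by case: (j == ord0).
Qed.

Lemma col_cost_pair (t : 'I_n.+1) : (2 <= n)%N -> (forall j, 0 <= w j) ->
  t != ord0 -> t != ord_max -> w t < w ord0 ->
  col_cost [set t] < col_cost [set t; ord_max].
Proof.
move=> hn hw t0 tm wt.
have key : col_cost [set t] + w ord0 <= col_cost [set t; ord_max] + w t.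
  rewrite /col_cost -(sum_mul_delta w ord0) -(sum_mul_delta w t) -!big_split /=.
  apply: ler_sum => j _; rewrite -!mulrDr -!natrD ler_wpM2l // ler_nat.
  exact: supp_weight_pair.
by move: key wt; lra.
Qed.

Lemma col_cost_supp (u : 'I_n -> 'F_2) (k : 'I_n) : (2 <= n)%N -> (forall j, 0 <= w j) ->
    w (lift ord0 k) < w ord0 ->
  col_cost [set lift ord0 k] <= col_cost (col_supp u k) /\
  (col_cost (col_supp u k) = col_cost [set lift ord0 k] -> ucoef u (lift ord0 k) = 0).
Proof.
move=> hn hw wt; rewrite /col_supp; case: ifP => h1; last first.
  by split=> // _; case: (F2_cases (ucoef u (lift ord0 k))) => // e; rewrite e eqxx in h1.
have tm : lift ord0 k != ord_max.
  by apply: contraTneq h1 => ->; rewrite ucoef_max eq_sym oner_eq0.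
have t0 : lift ord0 k != ord0 by rewrite eq_sym neq_lift.
have lt := col_cost_pair hn hw t0 tm wt.
by split=> [|e]; [exact: ltW | rewrite e ltxx in lt].
Qed.

End ColumnCost.

Lemma PeU_FN (R : realFieldType) n (q : 'I_n.+1 -> R) (p : 'I_n.+1 -> 'I_n -> R)
    (u : 'I_n -> 'F_2) : \sum_k u k = 1 ->
  PeU q p (FN_mat u) = (n.+1)%:R^-1 *
    (\sum_i ((\sum_(k < n.+1 | k != i) q k) + n%:R * q i)
     + \sum_k col_cost (p^~ k) (col_supp u k)).
Proof.
move=> hu; rewrite /PeU big_split /= exchange_big /=; congr (_ * (_ + _)).
by apply: eq_bigr => k _; apply: eq_bigr => i _; rewrite Gweight_FN.
Qed.

Lemma col_costs_min (R : realFieldType) n (p : 'I_n.+1 -> 'I_n -> R)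
    (u : 'I_n -> 'F_2) : (2 <= n)%N -> (forall i k, 0 <= p i k) ->
    (forall k : 'I_n, p (lift ord0 k) k < p ord0 k) ->
  let cost v := \sum_k col_cost (p^~ k) (col_supp v k) in
  cost (u_hat n) <= cost u /\
  (cost u = cost (u_hat n) -> forall k, ucoef u (lift ord0 k) = 0).
Proof.
move=> hn hp hp0 cost; rewrite /cost.
under eq_bigr => k _ do rewrite col_supp_u_hat.
have col k := @col_cost_supp R n (p^~ k) u k hn (hp^~ k) (hp0 k).
have diff_ge0 k : 0 <= col_cost (p^~ k) (col_supp u k) - col_cost (p^~ k) [set lift ord0 k].
  by rewrite subr_ge0; exact: (col k).1.
split=> [|/eqP]; first by apply: ler_sum => k _; exact: (col k).1.
rewrite -subr_eq0 -sumrB => /eqP /(psumr_eq0P (fun k _ => diff_ge0 k)) diff0 k.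
by apply: (col k).2; apply/eqP; rewrite -subr_eq0 diff0.
Qed.

Unset Implicit Arguments. Set Strict Implicit. Set Printing Implicit Defensive.

Theorem theorem6 (R : realFieldType) (n : nat) (hn : (3 <= n)%N)
  (q : 'I_n.+1 -> R) (p : 'I_n.+1 -> 'I_n -> R)
  (hq : forall k, 0 < q k < 1)
  (hp : forall i k, 0 < p i k < 1)
  (hpi : forall (i j : 'I_n.+1) (k : 'I_n), (i < j)%N -> p j k < p i k)
  (hpk : forall (i : 'I_n.+1) (k l : 'I_n), (k < l)%N -> p i k < p i l) :
  (forall F : 'M['F_2]_(n, n.+1), inFN F -> admissible F) /\
  inFN (Fhat n) /\
  (forall F : 'M['F_2]_(n, n.+1), inFN F ->
     PeU q p (Fhat n) <= PeU q p F /\ (PeU q p F = PeU q p (Fhat n) -> F = Fhat n)).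
Proof.
have hu_hat : \sum_k u_hat n k = 1 by apply: sum_u_hat; lia.
split; first by move=> F [u [hu ->]]; exact: FN_admissible.
split; first by exists (u_hat n); rewrite Fhat_FN.
move=> F [u [hu ->]].
have p_ge0 i k : 0 <= p i k by case/andP: (hp i k) => /ltW.
have p_dec k : p (lift ord0 k) k < p ord0 k by apply: hpi.
have [cost_le cost_eq] := col_costs_min u (ltnW hn) p_ge0 p_dec.
have N_gt0 : 0 < (n.+1)%:R^-1 :> R by rewrite invr_gt0 ltr0Sn.
rewrite Fhat_FN !PeU_FN //; split; first by rewrite ler_pM2l // lerD2l.
move=> /(mulfI (lt0r_neq0 N_gt0)) /addrI /cost_eq; exact: FN_eq_u_hat.
Qed.
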